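(* Let $c \geq 1$ and let $\Gamma \subset \mathbb{P}^c$ be a finite set of $d$ points in linear semi-uniform position. Then for each $m \geq 2$, $$h^0(\mathbb{P}^c, \mathcal{I}_\Gamma(m)) = \binom{c+m}{m} - d \ \text{ if } d \leq 2c+1, \qquad h^0(\mathbb{P}^c, \mathcal{I}_\Gamma(m)) \leq \binom{c+m}{m} - 2c - 1 \ \text{ if } d \geq 2c+2.$$ In particular, $h^0(\mathbb{P}^c, \mathcal{I}_\Gamma(2)) = \binom{c+1}{2} + c + 1 - d$ if $d \leq 2c+1$, and $h^0(\mathbb{P}^c, \mathcal{I}_\Gamma(2)) \leq \binom{c}{2}$ if $d \geq 2c+2$.
   Context: The ground field is algebraically closed of arbitrary characteristic. A finite set $\Gamma \subset \mathbb{P}^c$ is in linear semi-uniform position if it spans $\mathbb{P}^c$ and there are integers $\nu(i,\Gamma)$, $0 \leq i \leq c$, such that every $i$-dimensional linear subspace of $\mathbb{P}^c$ spanned by $i+1$ linearly independent points of $\Gamma$ contains exactly $\nu(i,\Gamma)$ points of $\Gamma$. $\mathcal{I}_\Gamma$ denotes the ideal sheaf of $\Gamma$. *)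

From HB Require Import structures.
From mathcomp Require Import all_boot all_order all_algebra.
Set Implicit Arguments. Unset Strict Implicit. Unset Printing Implicit Defensive.
Import Order.TTheory GRing.Theory Num.Theory.
Local Open Scope ring_scope.

(* A configuration of d points of P^c over K is given by a matrix
   G : 'M[K]_(d, c.+1) whose j-th row is a chosen vector of homogeneous
   coordinates of the j-th point. *)

Definition distinct_points (K : fieldType) (d c : nat) (G : 'M[K]_(d, c.+1)) :=
  (forall j : 'I_d, row j G != 0) /\
  (forall j k : 'I_d, j != k -> \rank (col_mx (row j G) (row k G)) = 2%N).

(* matrix whose row space is the span of the points indexed by S *)
Definition sub_pts (K : fieldType) (d c : nat) (G : 'M[K]_(d, c.+1))
  (S : {set 'I_d}) : 'M[K]_(d, c.+1) :=
  \matrix_(k < d, i < c.+1) (if k \in S then G k i else 0).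

Definition spans_Pc (K : fieldType) (d c : nat) (G : 'M[K]_(d, c.+1)) :=
  \rank G = c.+1.

Definition lin_semi_uniform (K : fieldType) (d c : nat) (G : 'M[K]_(d, c.+1)) :=
  spans_Pc G /\
  exists nu : nat -> nat, forall (i : nat), (i <= c)%N ->
    forall S : {set 'I_d}, #|S| = i.+1 -> \rank (sub_pts G S) = i.+1 ->
      #|[set j : 'I_d | (row j G <= sub_pts G S)%MS]| = nu i.

Definition monom (c m : nat) :=
  {t : {ffun 'I_(c.+1) -> 'I_(m.+1)} | (\sum_i (t i : nat) == m)%N}.

(* evaluation of the monomial basis of H^0(O_{P^c}(m)) at the points:
   a form of degree m with coefficient row vector u vanishes on Gamma
   iff u *m evalmx G m = 0 *)
Definition evalmx (K : fieldType) (d c : nat) (G : 'M[K]_(d, c.+1)) (m : nat)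
  : 'M[K]_(#|{: monom c m}|, d) :=
  \matrix_(a < #|{: monom c m}|, j < d)
    \prod_(i < c.+1) (G j i) ^+ (val (@enum_val _ (mem {: monom c m}) a) i : nat).

Definition h0_IGamma (K : fieldType) (d c : nat) (G : 'M[K]_(d, c.+1)) (m : nat)
  : nat := \rank (kermx (evalmx G m)).

From HB Require Import structures.
From mathcomp Require Import all_boot all_order all_algebra.
From mathcomp Require Import ring zify.
Import Order.TTheory GRing.Theory Num.Theory.
Set Implicit Arguments. Unset Strict Implicit. Unset Printing Implicit Defensive.

(* Since h^0(I_Γ(m)) = C(c+m, m) - rank (evalmx G m), it suffices to show that the
   evaluation matrix has rank at least min(d, 2c+1).  For m >= 2 a product of linear
   forms separates a point x from any two sets of points whose spans miss x, so the
   rank is at least the size of any set assembled from free blocks, each block lying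
   outside the span of the previous ones.  Fix a basis b_1, ..., b_(c+1) among the
   points and let layer k be the points in span(b_1 .. b_k) but not in
   span(b_1 .. b_(k-1)).  Semi-uniformity makes the number of points of a flat depend
   only on its rank; hence the layer sizes are nondecreasing, and any K points are
   free as long as the first K-1 layers are single points.  Taking min(|layer k|, K)
   points from each layer then gives at least min(d, 2c+1) points. *)

Lemma minn_sum_leq_sum_minn (n K0 : nat) (a : nat -> nat) :
  (1 <= n)%N -> a 1 = 1%N ->
  (forall k, (1 <= k < n)%N -> (a k <= a k.+1)%N) ->
  (forall k, (1 <= k <= n)%N ->
     (forall j, (1 <= j < k)%N -> a j = 1%N) -> (k <= K0)%N) ->
  (2 <= K0)%N ->
  (minn (\sum_(1 <= k < n.+1) a k) (2 * n - 1) <= \sum_(1 <= k < n.+1) minn (a k) K0)%N.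
Proof.
move=> n1 a1 a_mono K0_run K0_2.
pose S k := (\sum_(1 <= i < k.+1) minn (a i) K0)%N.
pose D k := (\sum_(1 <= i < k.+1) a i)%N.
have SS k : S k.+1 = (S k + minn (a k.+1) K0)%N by rewrite /S big_nat_recr.
have DS k : D k.+1 = (D k + a k.+1)%N by rewrite /D big_nat_recr.
(* Three regimes: all terms so far are 1; nothing has been truncated yet and
   K0 exceeds the initial run of ones; or the truncated sum has reached 2k - 1. *)
suff inv k : (1 <= k <= n)%N ->
   [\/ S k = k /\ D k = k /\ (forall j, (1 <= j <= k)%N -> a j = 1%N),
       (S k = D k /\ 2 <= a k /\ 2 * k + 1 <= D k + K0)%N
     | (2 * k - 1 <= S k /\ 2 <= a k)%N].
  have := inv n; rewrite n1 leqnn -/(S n) -/(D n) => /(_ isT).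
  by case=> [[? [? _]]|[? _]|[]]; lia.
elim: k => [//|k IH] /andP[_ kn].
have [->|k1] := posnP k.
  constructor 1; rewrite /S /D !big_nat1 a1; split; first lia; split=> // j.
  by move=> /andP[j1 j2]; have -> : j = 1%N by lia.
have := IH; rewrite k1 (ltnW kn) SS DS => /(_ isT).
have a_k := a_mono k; rewrite k1 kn /= in a_k.
case=> [[-> [-> ones]]|[-> [? ?]]|[? ?]].
- have K0_k : (k.+1 <= K0)%N.
    by apply: K0_run => [|j /andP[j1 j2]]; [lia | apply: ones; lia].
  have [e|ne] := eqVneq (a k.+1) 1%N.
    constructor 1; rewrite e; split; first lia; split; first lia.
    move=> j /andP[j1 j2]; have [->|jk] := eqVneq j k.+1; first exact: e.
    by apply: ones; lia.
  have a2 : (2 <= a k.+1)%N by rewrite ones ?k1 // in a_k; lia.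
  by have [le|lt] := leqP (a k.+1) K0; [constructor 2 | constructor 3]; lia.
- by have [le|lt] := leqP (a k.+1) K0; [constructor 2 | constructor 3]; lia.
- by constructor 3; lia.
Qed.

Local Open Scope ring_scope.

Lemma card_monom c m : #|{: monom c m}| = 'C(c + m, m).
Proof.
rewrite -[in RHS]bin_sub ?leq_addl // addnK -card_ord_partitions /monom card_sig.
pose g (f : {ffun 'I_c.+1 -> 'I_m.+1}) := [tuple f i | i < c.+1].
have g_inj : injective g.
  move=> f1 f2 /(congr1 (fun t => tnth t)) eq_g; apply/ffunP => i.
  by have := congr1 (fun h => h i) eq_g; rewrite !tnth_mktuple.
rewrite -(card_image g_inj); apply: eq_card => t; rewrite inE.
apply/imageP/idP => [[f] | t_m].
  by rewrite inE => f_m ->; rewrite /g /= big_map enumT.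
exists [ffun i => tnth t i]; last first.
  by apply: eq_from_tnth => i; rewrite tnth_mktuple ffunE.
move/eqP: t_m; rewrite big_tuple inE => t_m.
by apply/eqP; rewrite -[X in _ = X]t_m; apply: eq_bigr => i _; rewrite ffunE.
Qed.

Section ProductsOfLinearForms.
Variables (K : fieldType) (c : nat).

Definition eval_form m (f : monom c m -> K) (x : 'I_c.+1 -> K) :=
  \sum_t f t * \prod_i x i ^+ (val t i : nat).

Definition mulX_ffun m (t : monom c m) (i : 'I_c.+1) : {ffun 'I_c.+1 -> 'I_m.+2} :=
  [ffun k => inord ((val t k : nat) + (k == i))].

Lemma mulX_ffunE m (t : monom c m) i k :
  (mulX_ffun t i k : nat) = ((val t k : nat) + (k == i))%N.
Proof.
rewrite ffunE inordK // ltnS.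
have := ltn_ord (val t k); rewrite ltnS.
by case: (k == i); rewrite ?addn1 ?addn0 // => /leqW.
Qed.

Lemma mulX_ffun_sum m (t : monom c m) i : (\sum_k (mulX_ffun t i k : nat) == m.+1)%N.
Proof.
rewrite (eq_bigr _ (fun k _ => mulX_ffunE t i k)) big_split /= (eqP (valP t)).
by rewrite (bigD1 i) //= eqxx big1 ?addn0 ?addn1 // => k /negbTE ->.
Qed.

Definition monom_mulX m (t : monom c m) i : monom c m.+1 :=
  exist _ (mulX_ffun t i) (mulX_ffun_sum t i).

Lemma eval_form_mul_linear m (f : monom c m -> K) (w : 'I_c.+1 -> K) :
  exists g : monom c m.+1 -> K, forall x,
    eval_form g x = eval_form f x * \sum_i x i * w i.
Proof.
exists (fun s => \sum_(p : monom c m * 'I_c.+1 | monom_mulX p.1 p.2 == s) f p.1 * w p.2).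
move=> x; rewrite /eval_form.
under eq_bigr => s _ do rewrite big_distrl /=.
rewrite (exchange_big_dep xpredT) //=.
rewrite (eq_bigr (fun p => f p.1 * w p.2 *
  \prod_i x i ^+ (val (monom_mulX p.1 p.2) i : nat))); last first.
  by move=> p _; rewrite (big_pred1 (monom_mulX p.1 p.2)) // => s; rewrite eq_sym.
rewrite big_distrl /=.
under [in RHS]eq_bigr => t _ do rewrite big_distrr /=.
rewrite pair_bigA /=; apply: eq_bigr => -[t i] _ /=.
have -> : \prod_k x k ^+ (mulX_ffun t i k : nat) = (\prod_k x k ^+ (val t k : nat)) * x i.
  rewrite (eq_bigr (fun k => x k ^+ (val t k : nat) * x k ^+ (k == i))); last first.
    by move=> k _; rewrite mulX_ffunE exprD.
  rewrite big_split /=; congr (_ * _).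
  by rewrite (bigD1 i) //= eqxx expr1 big1 ?mulr1 // => k /negbTE ->.
ring.
Qed.

Lemma const0_sum : (\sum_i ([ffun _ => ord0] : {ffun 'I_c.+1 -> 'I_1}) i == 0)%N.
Proof. by rewrite big1 // => i _; rewrite ffunE. Qed.

Definition monom0 : monom c 0 :=
  exist (fun t : {ffun 'I_c.+1 -> 'I_1} => \sum_i (t i : nat) == 0)%N
    [ffun _ => ord0] const0_sum.

Lemma eval_form_prod_linear m (ws : 'I_m -> 'I_c.+1 -> K) :
  exists f : monom c m -> K, forall x, eval_form f x = \prod_k \sum_i x i * ws k i.
Proof.
elim: m ws => [|m IH] ws.
  exists (fun s => (s == monom0)%:R) => x; rewrite big_ord0 /eval_form (bigD1 monom0) //=.
  rewrite eqxx mul1r big1 => [|i _]; last by rewrite ffunE.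
  by rewrite big1 ?addr0 // => s /negbTE ->; rewrite mul0r.
have [f Hf] := IH (fun k => ws (widen_ord (leqnSn m) k)).
have [g Hg] := eval_form_mul_linear f (ws ord_max).
by exists g => x; rewrite Hg Hf [in RHS]big_ord_recr.
Qed.

Lemma mul_row_evalmx d (G : 'M[K]_(d, c.+1)) m (f : monom c m -> K) j :
  ((\row_a f (enum_val a)) *m evalmx G m) 0 j = eval_form f (fun i => G j i).
Proof.
by rewrite mxE /eval_form [RHS]big_enum_val; apply: eq_bigr => a _; rewrite !mxE.
Qed.

End ProductsOfLinearForms.

Section PointSpans.
Variables (K : fieldType) (d c : nat) (G : 'M[K]_(d, c.+1)).
Implicit Types (S T : {set 'I_d}) (j k : 'I_d).

Definition flat S := [set j | (row j G <= sub_pts G S)%MS].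
Definition prank S := \rank (sub_pts G S).
Definition pfree S := prank S = #|S|.

Lemma sub_pts0 : sub_pts G set0 = 0.
Proof. by apply/matrixP => i k; rewrite !mxE inE. Qed.

Lemma prank0 : prank set0 = 0%N.
Proof. by rewrite /prank sub_pts0 mxrank0. Qed.

Lemma sub_pts_setT : sub_pts G [set: 'I_d] = G.
Proof. by apply/matrixP => i k; rewrite !mxE inE. Qed.

Lemma row_sub_pts S k : row k (sub_pts G S) = if k \in S then row k G else 0.
Proof. by apply/rowP => i; rewrite !mxE; case: (k \in S); rewrite ?mxE. Qed.

Lemma row_sub_pts_mem S k : k \in S -> (row k G <= sub_pts G S)%MS.
Proof. by move=> kS; have := row_sub k (sub_pts G S); rewrite row_sub_pts kS. Qed.

Lemma sub_pts_subP n S (X : 'M_(n, c.+1)) :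
  (forall k, k \in S -> (row k G <= X)%MS) -> (sub_pts G S <= X)%MS.
Proof.
move=> SX; apply/row_subP => k; rewrite row_sub_pts.
by case: ifP => [/SX //|_]; exact: sub0mx.
Qed.

Lemma sub_pts_flat S T : S \subset flat T -> (sub_pts G S <= sub_pts G T)%MS.
Proof. by move=> /subsetP ST; apply: sub_pts_subP => k /ST; rewrite inE. Qed.

Lemma subset_flat S : S \subset flat S.
Proof. by apply/subsetP => k kS; rewrite inE row_sub_pts_mem. Qed.

Lemma sub_pts_mono S T : S \subset T -> (sub_pts G S <= sub_pts G T)%MS.
Proof. by move=> ST; apply: sub_pts_flat (subset_trans ST (subset_flat T)). Qed.

Lemma flatS S T : (sub_pts G S <= sub_pts G T)%MS -> flat S \subset flat T.
Proof. by move=> ST; apply/subsetP => k; rewrite !inE => /submx_trans; apply. Qed.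

Lemma flat_subset S T : S \subset T -> flat S \subset flat T.
Proof. by move=> ST; apply/flatS/sub_pts_mono. Qed.

Lemma flat_subset_flat S T : S \subset flat T -> flat S \subset flat T.
Proof. by move=> ST; apply/flatS/sub_pts_flat. Qed.

Lemma flat_subset_prank S T : S \subset flat T -> prank S = prank T ->
  flat T \subset flat S.
Proof.
move=> /sub_pts_flat ST eqST; apply: flatS.
by have [_ <-] := mxrank_leqif_sup ST; apply/eqP.
Qed.

Lemma sub_pts_setU1 S j : (sub_pts G (j |: S) :=: sub_pts G S + row j G)%MS.
Proof.
apply/eqmxP/andP; split.
  apply: sub_pts_subP => k; rewrite !inE => /orP[/eqP -> | kS].
    exact: addsmxSr.
  exact: submx_trans (row_sub_pts_mem kS) (addsmxSl _ _).
rewrite addsmx_sub sub_pts_mono ?subsetUr //=.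
by apply: row_sub_pts_mem; apply: setU11.
Qed.

Lemma prank_setU1_flat S j : j \in flat S -> prank (j |: S) = prank S.
Proof. by rewrite inE => jS; rewrite /prank sub_pts_setU1 (addsmx_idPl jS). Qed.

Lemma prank_setU1_notflat S j : j \notin flat S -> prank (j |: S) = (prank S).+1.
Proof.
rewrite inE /prank sub_pts_setU1 => jS; set M := sub_pts G S; set v := row j G.
have rank_v : \rank v = 1%N.
  by rewrite rank_rV; case: eqP => // v0; move: jS; rewrite -/v v0 sub0mx.
suff rank_cap : \rank (M :&: v)%MS = 0%N.
  by have := mxrank_sum_cap M v; rewrite rank_cap rank_v addn0 addn1.
have := mxrankS (capmxSr M v); rewrite rank_v.
case rank_cap: (\rank (M :&: v)%MS) => [|[|n]] // _.
have v_cap : (v <= M :&: v)%MS.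
  by rewrite -(mxrank_leqif_sup (capmxSr M v)) rank_cap rank_v.
by move: jS; rewrite (submx_trans v_cap (capmxSl _ _)).
Qed.

Lemma prank_setU1_le S j : (prank (j |: S) <= (prank S).+1)%N.
Proof.
by case: (boolP (j \in flat S)) => jS;
  [rewrite prank_setU1_flat | rewrite prank_setU1_notflat].
Qed.

Lemma prank_setU_le S T : (prank (S :|: T) <= prank S + #|T|)%N.
Proof.
rewrite -[in X in (prank X <= _)%N](set_enum T) cardE.
elim: (enum T) => [|a s IH] /=.
  by rewrite addn0 mxrankS // sub_pts_mono //; apply/subsetP => x; rewrite !inE orbF.
rewrite set_cons setUCA addnS; apply: leq_trans (prank_setU1_le _ _) _.
by rewrite ltnS.
Qed.

Lemma prank_card S : (prank S <= #|S|)%N.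
Proof. by have := prank_setU_le set0 S; rewrite set0U prank0. Qed.

Lemma pfreeS S T : T \subset S -> pfree S -> pfree T.
Proof.
move=> TS freeS; apply/eqP; rewrite eqn_leq prank_card /=.
have := prank_setU_le T (S :\: T).
by rewrite -{1}(setIidPr TS) setID freeS -(cardsID T S) (setIidPr TS) leq_add2r.
Qed.

Lemma pfree_notflat S j : j \notin S -> pfree (j |: S) -> j \notin flat S.
Proof.
move=> jS free_jS; apply/negP => /prank_setU1_flat eq_rank.
by have := prank_card S; rewrite -eq_rank free_jS cardsU1 jS ltnn.
Qed.

Lemma exists_basis S : exists2 B : {set 'I_d}, B \subset S &
  [/\ pfree B, prank B = prank S & flat B = flat S].
Proof.
suff [B BS [freeB SB]] : exists2 B : {set 'I_d}, B \subset S &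
    pfree B /\ (sub_pts G S <= sub_pts G B)%MS.
  exists B => //; split=> //.
    by apply/eqP; rewrite eqn_leq /prank !mxrankS // sub_pts_mono.
  by apply/eqP; rewrite eqEsubset !flatS // sub_pts_mono.
rewrite -(set_enum S); elim: (enum S) => [|a s [B Bs [freeB sB]]].
  by exists set0; rewrite ?sub0set // /pfree prank0 cards0 sub_pts_mono.
rewrite set_cons; have [aB|aB] := boolP (a \in flat B).
  exists B; first exact: subset_trans Bs (subsetUr _ _).
  split=> //; apply: sub_pts_subP => k; rewrite in_setU1 => /orP[/eqP -> | ks].
    by rewrite inE in aB.
  exact: submx_trans (row_sub_pts_mem ks) sB.
have aB' : a \notin B := contra (subsetP (subset_flat B) a) aB.
exists (a |: B); first exact: setUS.
split; first by rewrite /pfree prank_setU1_notflat // freeB cardsU1 aB'.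
apply: sub_pts_subP => k; rewrite in_setU1 => /orP[/eqP -> | ks].
  by apply: row_sub_pts_mem; apply: setU11.
exact: submx_trans (submx_trans (row_sub_pts_mem ks) sB) (sub_pts_mono (subsetUr _ _)).
Qed.

End PointSpans.

Section Separation.
Variables (K : fieldType) (d c : nat) (G : 'M[K]_(d, c.+1)).
Implicit Types (A B S T : {set 'I_d}).

Definition separating n (E : 'M[K]_(n, d)) :=
  forall A B x, x \notin flat G A -> x \notin flat G B ->
  exists2 u : 'rV_n, (u *m E) 0 x != 0 & forall y, y \in A :|: B -> (u *m E) 0 y = 0.

Lemma exists_hyperplane A x : x \notin flat G A ->
  exists2 w : 'I_c.+1 -> K, \sum_i G x i * w i != 0 &
    forall y, y \in A -> \sum_i G y i * w i = 0.
Proof.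
rewrite inE submxE; set M := cokermx (sub_pts G A) => xA.
have [l xMl] : exists l, (row x G *m M) 0 l != 0.
  apply/existsP; move: xA; apply: contraR; rewrite negb_exists => /forallP xM0.
  by apply/eqP/rowP => l; rewrite [RHS]mxE; apply/eqP; rewrite -[_ == _]negbK xM0.
exists (fun i => M i l).
  by move: xMl; rewrite mxE; under eq_bigr do rewrite mxE.
move=> y yA; have := row_sub_pts_mem G yA; rewrite submxE -/M => /eqP/rowP/(_ l).
by rewrite !mxE; under eq_bigr do rewrite mxE.
Qed.

(* A product of m >= 2 linear forms, one vanishing on A and the others on B. *)
Lemma evalmx_separating m : (2 <= m)%N -> separating (evalmx G m).
Proof.
move=> m2 A B x xA xB.
have [wA wAx wAA] := exists_hyperplane xA.
have [wB wBx wBB] := exists_hyperplane xB.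
pose ws (k : 'I_m) := if (k : nat) == 0%N then wB else wA.
have [f Hf] := eval_form_prod_linear ws.
exists (\row_a f (enum_val a)) => [|y]; rewrite mul_row_evalmx Hf.
  by apply/prodf_neq0 => k _; rewrite /ws; case: ifP.
rewrite in_setU => /orP[yA|yB].
  by rewrite (bigD1 (Ordinal m2)) //= /ws /= wAA ?mul0r.
by rewrite (bigD1 (Ordinal (ltnW m2))) //= /ws /= wBB ?mul0r.
Qed.

Definition colsel S : 'M[K]_d := diag_mx (\row_j (j \in S)%:R).

Lemma colselE n (E : 'M[K]_(n, d)) S :
  E *m colsel S = \matrix_(i, j) (E i j * (j \in S)%:R).
Proof. by rewrite mul_mx_diag; apply/matrixP => i j; rewrite !mxE. Qed.

(* The row u *m E, cut down to the columns x |: S, is nonzero but vanishes on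
   the columns S, so dropping column x loses rank. *)
Lemma rank_colsel_setU1 n (E : 'M[K]_(n, d)) S x (u : 'rV_n) :
  x \notin S -> (u *m E) 0 x != 0 -> (forall y, y \in S -> (u *m E) 0 y = 0) ->
  ((\rank (E *m colsel S)).+1 <= \rank (E *m colsel (x |: S)))%N.
Proof.
move=> xS ux uS; set W := E *m colsel (x |: S).
have EW : E *m colsel S = W *m colsel S.
  rewrite /W !colselE; apply/matrixP => i j; rewrite !mxE.
  by case: (boolP (j \in S)) => jS; rewrite ?mulr0 // in_setU1 jS orbT !mulr1.
set v := u *m W.
have vE j : v 0 j = (u *m E) 0 j * (j \in x |: S)%:R.
  by rewrite /v /W mulmxA colselE mxE.
have v_ker : (v <= kermx (colsel S))%MS.
  apply/sub_kermxP; rewrite colselE; apply/rowP => j; rewrite [in RHS]mxE mxE vE.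
  by case: (boolP (j \in S)) => jS; rewrite ?mulr0 // uS // !mul0r.
have v0 : v != 0.
  apply/eqP => /rowP/(_ x); rewrite vE [in RHS]mxE setU11 mulr1 => ux0.
  by move: ux; rewrite ux0 eqxx.
have cap_ge1 : (1 <= \rank (W :&: kermx (colsel S))%MS)%N.
  by have := mxrankS (_ : (v <= W :&: kermx (colsel S))%MS); rewrite rank_rV v0;
    apply; rewrite sub_capmx submxMl.
by rewrite EW -(mxrank_mul_ker W (colsel S)) -addn1 leq_add2l.
Qed.

(* Each new free point x of T is separated from A and from T \ x, whose
   flats both miss x. *)
Lemma rank_colsel_setU_pfree n (E : 'M[K]_(n, d)) A T : separating E ->
  pfree G T -> (forall x, x \in T -> x \notin flat G A) ->
  (\rank (E *m colsel A) + #|T| <= \rank (E *m colsel (A :|: T)))%N.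
Proof.
move=> sepE; have [k] := ubnP #|T|; elim: k T => // k IH T.
have [->|[x xT]] := set_0Vmem T; first by rewrite setU0 cards0 addn0.
rewrite ltnS (cardsD1 x T) xT add1n => cT freeT TA.
set T' := T :\ x.
have T'x : x |: T' = T by rewrite setD1K.
have xT' : x \notin T' by rewrite !inE eqxx.
have IH' := IH T' cT (pfreeS (subD1set T x) freeT).
have xT'flat : x \notin flat G T' by apply: pfree_notflat; rewrite // T'x.
have [u ux uy] := sepE _ _ _ (TA x xT) xT'flat.
have xAT' : x \notin A :|: T'.
  rewrite in_setU negb_or xT' andbT.
  by apply: contra (TA x xT); apply: (subsetP (subset_flat G A)).
have := rank_colsel_setU1 xAT' ux uy; rewrite setUCA T'x.
apply: leq_trans; rewrite addnS ltnS; apply: IH' => y /setD1P[_]; exact: TA.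
Qed.

End Separation.

Arguments colsel {K d} S.

Section SemiUniform.
Variables (K : fieldType) (d c : nat) (G : 'M[K]_(d, c.+1)) (nu : nat -> nat).
Hypothesis nuP : forall i, (i <= c)%N -> forall S : {set 'I_d}, #|S| = i.+1 ->
  \rank (sub_pts G S) = i.+1 -> #|[set j | (row j G <= sub_pts G S)%MS]| = nu i.
Hypothesis G_rows : forall j : 'I_d, row j G != 0.
Hypothesis G_distinct : forall j k : 'I_d, j != k ->
  \rank (col_mx (row j G) (row k G)) = 2%N.

Local Notation flat := (flat G).
Local Notation prank := (prank G).
Local Notation pfree := (pfree G).
Implicit Types (S T : {set 'I_d}).

Lemma flat0 : flat set0 = set0.
Proof.
apply/setP => j; rewrite !inE sub_pts0; apply/negP => /submx0null j0.
by move: (G_rows j); rewrite j0 eqxx.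
Qed.

Lemma flat1 b : flat [set b] = [set b].
Proof.
apply/setP => j; rewrite inE [RHS]inE.
apply/idP/idP => [jb|/eqP ->]; last by apply: row_sub_pts_mem; rewrite inE.
apply/negPn/negP => /G_distinct; rewrite -addsmxE => rank2.
have := prank_card G [set b]; rewrite cards1.
have : (row j G + row b G <= sub_pts G [set b])%MS.
  by rewrite addsmx_sub jb row_sub_pts_mem // inE.
by move/mxrankS; rewrite rank2 => /leq_trans/[apply].
Qed.

Lemma card_flat_pfree S : pfree S -> (0 < #|S|)%N -> #|flat S| = nu #|S|.-1.
Proof.
move=> freeS S0; have Sc : (#|S| <= c.+1)%N by rewrite -freeS rank_leq_col.
by apply: nuP; rewrite ?prednK // -ltnS prednK.
Qed.

Section Flag.
Variable B : {set 'I_d}.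
Hypotheses (freeB : pfree B) (cardB : #|B| = c.+1).

Definition flag k := [set:: take k (enum B)].

Lemma card_flag k : (k <= c.+1)%N -> #|flag k| = k.
Proof.
move=> kc; rewrite cardsE (card_uniqP _) ?take_uniq ?enum_uniq //.
by rewrite size_takel // -cardE cardB.
Qed.

Lemma flag_subset k : flag k \subset B.
Proof. by apply/subsetP => x; rewrite inE => /mem_take; rewrite mem_enum. Qed.

Lemma pfree_flag k : pfree (flag k).
Proof. exact: pfreeS (flag_subset k) freeB. Qed.

Lemma flag0 : flag 0 = set0.
Proof. by apply/setP => x; rewrite !inE take0. Qed.

Lemma flag_max : flag c.+1 = B.
Proof. by rewrite /flag -cardB cardE take_size set_enum. Qed.

Lemma flag_mono k l : (k <= l)%N -> flag k \subset flag l.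
Proof.
by move=> kl; apply/subsetP => x; rewrite !inE -(take_takel _ kl); apply: mem_take.
Qed.

Lemma flagS k : (k <= c)%N -> exists2 x, flag k.+1 = x |: flag k & x \notin flag k.
Proof.
move=> kc; have ks : (k < size (enum B))%N by rewrite -cardE cardB.
case E: (enum B) ks => [//|x0 s] ks; rewrite -E in ks.
exists (nth x0 (enum B) k).
  by apply/setP => z; rewrite /flag (take_nth x0 ks) !inE mem_rcons in_cons.
have := take_uniq k.+1 (enum_uniq (mem B)); rewrite (take_nth x0 ks) rcons_uniq.
by case/andP; rewrite inE.
Qed.

Definition nflat k := #|flat (flag k)|.

Lemma flat_flag_mono k l : (k <= l)%N -> flat (flag k) \subset flat (flag l).
Proof. by move=> kl; apply/flat_subset/flag_mono. Qed.

Lemma nflat_mono k l : (k <= l)%N -> (nflat k <= nflat l)%N.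
Proof. by move=> kl; apply/subset_leq_card/flat_flag_mono. Qed.

Lemma nflat0 : nflat 0 = 0%N.
Proof. by rewrite /nflat flag0 flat0 cards0. Qed.

Lemma nflat1 : nflat 1 = 1%N.
Proof.
by rewrite /nflat; have [x -> _] := flagS (leq0n c); rewrite flag0 setU0 flat1 cards1.
Qed.

Lemma card_flat_pfree_flag S : pfree S -> #|flat S| = nflat #|S|.
Proof.
move=> freeS; have Sc : (#|S| <= c.+1)%N by rewrite -freeS rank_leq_col.
have [/cards0_eq ->|S0] := posnP #|S|; first by rewrite flat0 cards0 nflat0.
by rewrite /nflat !card_flat_pfree ?card_flag //; apply: pfree_flag.
Qed.

Hypothesis G_full : \rank G = c.+1.

Lemma nflat_max : nflat c.+1 = d.
Proof.
rewrite /nflat flag_max; suff -> : flat B = setT by rewrite cardsT card_ord.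
apply/eqP; rewrite eqEsubset subsetT /=.
apply: subset_trans (subset_flat G setT) (flat_subset_prank _ _).
  exact: subset_trans (subsetT B) (subset_flat G setT).
by rewrite freeB cardB /prank sub_pts_setT G_full.
Qed.

Definition dflat k := (nflat k - nflat k.-1)%N.

Definition layer k := flat (flag k) :\: flat (flag k.-1).

Lemma card_layer k : #|layer k| = dflat k.
Proof. by rewrite cardsDS // flat_flag_mono // leq_pred. Qed.

Lemma dflat1 : dflat 1 = 1%N.
Proof. by rewrite /dflat nflat1 nflat0. Qed.

Lemma nflat_sum k : (k <= c.+1)%N -> nflat k = (\sum_(1 <= j < k.+1) dflat j)%N.
Proof.
elim: k => [_|k IH kc]; first by rewrite nflat0 big_geq.
by rewrite big_nat_recr //= -IH ?(ltnW kc) // /dflat subnKC // nflat_mono.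
Qed.

(* Writing flag k.+2 = x |: flag k.+1, the flat spanned by x and flag k has
   the same size as flat (flag k.+1), and its part outside flat (flag k)
   lies in layer k.+2. *)
Lemma dflat_mono k : (1 <= k <= c)%N -> (dflat k <= dflat k.+1)%N.
Proof.
case: k => [//|k] /= kc.
have [x flag_x x_flag] := flagS kc.
set F := flat (x |: flag k).
have x_k : x \notin flag k.
  exact: contraNN (subsetP (flag_mono (leqnSn k)) x) x_flag.
have card_k1 : #|x |: flag k| = k.+1 by rewrite cardsU1 x_k card_flag //; lia.
have free_x : pfree (x |: flag k).
  by apply: pfreeS (pfree_flag k.+2); rewrite flag_x setUS // flag_mono.
have x_flat : x \notin flat (flag k.+1).
  by apply: pfree_notflat x_flag _; rewrite -flag_x; apply: pfree_flag.
have F_k2 : F \subset flat (flag k.+2).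
  by apply: flat_subset; rewrite flag_x setUS // flag_mono.
have F_layer : F :\: flat (flag k) \subset layer k.+2.
  apply/subsetP => z /setDP[zF zk]; rewrite inE /= (subsetP F_k2 z zF) andbT.
  apply: contra x_flat => z_k1.
  have free_z : prank (z |: flag k) = k.+1.
    by rewrite prank_setU1_notflat // (pfree_flag k) card_flag //; lia.
  have zF' : z |: flag k \subset F.
    by rewrite subUset sub1set zF (subset_trans (subsetUr [set x] _)) ?(subset_flat G).
  have zk1 : z |: flag k \subset flat (flag k.+1).
    rewrite subUset sub1set z_k1.
    exact: subset_trans (flag_mono (leqnSn k)) (subset_flat G _).
  apply: (subsetP (flat_subset_flat zk1)).
  apply: (subsetP (flat_subset_prank zF' _)).
    by rewrite free_z free_x card_k1.
  by rewrite (subsetP (subset_flat G _)) ?setU11.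
have := subset_leq_card F_layer.
rewrite card_layer cardsDS; last by apply: flat_subset G _ _ _; apply: subsetUr.
by rewrite (card_flat_pfree_flag free_x) card_k1.
Qed.


Lemma pfree_small K0 : (forall j, (1 <= j < K0)%N -> dflat j = 1%N) ->
  forall X : {set 'I_d}, (#|X| <= K0)%N -> pfree X.
Proof.
move=> ones X XK; apply/eqP; rewrite eqn_leq prank_card /= leqNgt; apply/negP => rX.
have [Bx _ [freeBx rBx flatBx]] := exists_basis G X.
have nflat_r : nflat (prank X) = prank X.
  rewrite nflat_sum ?rank_leq_col // (eq_big_nat _ _ (F2 := fun=> 1%N)).
    by rewrite sum_nat_const_nat muln1 subn1.
  move=> j /andP[j1 j2]; apply: ones.
  by rewrite j1 (leq_trans _ XK) // (leq_ltn_trans _ rX).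
have := subset_leq_card (subset_flat G X).
by rewrite -flatBx card_flat_pfree_flag // -freeBx rBx nflat_r leqNgt rX.
Qed.

Lemma rank_colsel_layers n (E : 'M[K]_(n, d)) (T : nat -> {set 'I_d}) :
  separating G E ->
  (forall k, (1 <= k <= c.+1)%N -> T k \subset layer k /\ pfree (T k)) ->
  forall k, (k <= c.+1)%N ->
    \bigcup_(1 <= j < k.+1) T j \subset flat (flag k) /\
    (\sum_(1 <= j < k.+1) #|T j| <= \rank (E *m colsel (\bigcup_(1 <= j < k.+1) T j)))%N.
Proof.
move=> sepE T_layer; elim=> [_|k IH kc]; first by rewrite !big_geq ?sub0set.
have [U_k rank_U] := IH (ltnW kc).
have [Tk_layer freeTk] := T_layer k.+1 kc.
rewrite !(big_nat_recr k.+1) //=; split.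
  rewrite subUset (subset_trans U_k) ?flat_flag_mono //=.
  exact: subset_trans Tk_layer (subsetDl _ _).
apply: leq_trans (leq_add rank_U (leqnn _)) (rank_colsel_setU_pfree sepE freeTk _).
move=> x /(subsetP Tk_layer); rewrite inE /= => /andP[x_k _].
by apply: contra x_k; apply/subsetP/flat_subset_flat.
Qed.

(* K0 is the first index whose layer is not a single point (capped at c+1):
   any K0 points are free, so each layer contributes min(|layer|, K0) free
   points to a set on which the separating matrix has full column rank. *)
Lemma separating_rank_ge n (E : 'M[K]_(n, d)) : (1 <= c)%N ->
  separating G E -> (minn d (2 * c + 1) <= \rank E)%N.
Proof.
move=> c1 sepE.
pose P k := (k <= c.+1)%N && [forall j : 'I_k, (0 < j)%N ==> (dflat j == 1%N)].
have P0 : exists k, P k by exists 0%N; rewrite /P leq0n; apply/forallP => -[].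
have P_le k : P k -> (k <= c.+1)%N by case/andP.
have [K0 PK0 K0_max] := ex_maxnP P0 P_le.
have ones j : (1 <= j < K0)%N -> dflat j = 1%N.
  case/andP=> j1 jK; case/andP: PK0 => _ /forallP/(_ (Ordinal jK)).
  by rewrite j1 => /eqP.
have K0_2 : (2 <= K0)%N.
  apply: K0_max; rewrite /P ltnS c1 /=.
  by apply/forallP => -[[|[|j]] //= _]; rewrite dflat1.
pose T k := [set:: take (minn (dflat k) K0) (enum (layer k))].
have card_T k : #|T k| = minn (dflat k) K0.
  rewrite cardsE (card_uniqP _) ?take_uniq ?enum_uniq // size_takel //.
  by rewrite -cardE card_layer geq_minl.
have T_layer k : (1 <= k <= c.+1)%N -> T k \subset layer k /\ pfree (T k).
  split; last by apply: (pfree_small ones); rewrite card_T geq_minr.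
  by apply/subsetP => x; rewrite inE => /mem_take; rewrite mem_enum.
have [_ rank_U] := rank_colsel_layers sepE T_layer (leqnn c.+1).
apply: leq_trans (leq_trans rank_U (mxrankM_maxl _ _)).
rewrite (eq_bigr _ (fun k _ => card_T k)) -nflat_max nflat_sum //.
have -> : (2 * c + 1 = 2 * c.+1 - 1)%N by lia.
apply: minn_sum_leq_sum_minn => // [|k|k kc ones_k].
- exact: dflat1.
- by case/andP=> k1 kc; apply: dflat_mono; rewrite k1.
- apply: K0_max; rewrite /P; case/andP: kc => _ -> /=.
  by apply/forallP => j; apply/implyP => j0; rewrite ones_k // j0 ltn_ord.
Qed.

End Flag.
End SemiUniform.

Lemma rank_evalmx_ge (K : fieldType) (c d : nat) (G : 'M[K]_(d, c.+1)) m :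
  (1 <= c)%N -> (2 <= m)%N -> distinct_points G -> lin_semi_uniform G ->
  (minn d (2 * c + 1) <= \rank (evalmx G m))%N.
Proof.
move=> c1 m2 [G_rows G_distinct] [G_full [nu nuP]].
have [B _ [freeB rankB _]] := exists_basis G [set: 'I_d].
have cardB : #|B| = c.+1 by rewrite -freeB rankB /prank sub_pts_setT.
apply: (separating_rank_ge nuP G_rows G_distinct freeB cardB G_full c1).
exact: evalmx_separating.
Qed.

Lemma h0_IGammaE (K : fieldType) (c d : nat) (G : 'M[K]_(d, c.+1)) m :
  h0_IGamma G m = ('C(c + m, m) - \rank (evalmx G m))%N.
Proof. by rewrite /h0_IGamma mxrank_ker -card_monom. Qed.

Unset Implicit Arguments.

Theorem corollary2p3 (K : closedFieldType) (c d : nat) (G : 'M[K]_(d, c.+1)) :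
  (1 <= c)%N -> distinct_points G -> lin_semi_uniform G ->
  (forall m : nat, (2 <= m)%N ->
     ((d <= 2 * c + 1)%N ->
        (h0_IGamma G m)%:Z = ('C(c + m, m))%:Z - d%:Z) /\
     ((2 * c + 2 <= d)%N ->
        (h0_IGamma G m)%:Z <= ('C(c + m, m))%:Z - (2 * c + 1)%:Z)) /\
  ((d <= 2 * c + 1)%N ->
     (h0_IGamma G 2)%:Z = ('C(c + 1, 2))%:Z + (c + 1)%:Z - d%:Z) /\
  ((2 * c + 2 <= d)%N -> (h0_IGamma G 2 <= 'C(c, 2))%N).
Proof.
move=> c1 Gpts Gsu.
have bounds m : (2 <= m)%N ->
  [/\ (minn d (2 * c + 1) <= \rank (evalmx G m))%N,
      (\rank (evalmx G m) <= d)%N,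
      (\rank (evalmx G m) <= 'C(c + m, m))%N &
      h0_IGamma G m = ('C(c + m, m) - \rank (evalmx G m))%N].
  move=> m2; split; rewrite ?h0_IGammaE ?rank_leq_col //.
    exact: rank_evalmx_ge.
  by rewrite -card_monom rank_leq_row.
have binom2 : 'C(c + 2, 2) = ('C(c + 1, 2) + c.+1)%N.
  by rewrite addn2 binS bin1 addn1.
have binom2' : 'C(c + 1, 2) = ('C(c, 2) + c)%N by rewrite addn1 binS bin1.
split=> [m m2|]; first by have [? ? ? ->] := bounds m m2; split=> ?; lia.
by have [] := bounds 2%N isT; rewrite binom2 binom2' => ? ? ? ->; split=> ?; lia.
Qed.
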